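(* Let $\mathcal X,\mathcal C,d,G_{\mathcal C}$ be as in the context, let $\sigma$ be any cycle decomposition of $G_{\mathcal C}$, $\epsilon\in[0,1]$, $N\ge1$. With $\mathcal B_{\mathcal C}(\sigma)$ of size $M=2^{|\sigma|}$, $\mathbb P_0=p_0^N$ and $\mathbb P_1=\frac1M\sum_{b\in\mathcal B_{\mathcal C}(\sigma)}q_{b,\epsilon}^N$, $$\chi^2(\mathbb P_1,\mathbb P_0)+1\le\exp\Big(\frac{N^2\epsilon^4}{2d}\alpha(\sigma)\Big).$$
   Context: $\mathcal X$ is a finite set of $n$ items, $\mathcal C$ a collection of $m\ge n$ distinct subsets of $\mathcal X$ of size at least 2, $d=\sum_{C\in\mathcal C}|C|$; coordinates are indexed by pairs $(x,C)$, $x\in C\in\mathcal C$. $G_{\mathcal C}$ is the bipartite graph with item-nodes $\mathcal X$, set-nodes $\mathcal C$, and an edge $(x,C)$ iff $x\in C$. Standing assumptions: $G_{\mathcal C}$ connected, every $|C|$ even, every item in an even number of sets. A cycle decomposition $\sigma$ partitions the edges of $G_{\mathcal C}$ into edge-disjoint simple cycles $\sigma_1,\dots,\sigma_{|\sigma|}$; $\alpha(\sigma)=\frac1d\sum_i|\sigma_i|^2$ with $|\sigma_i|$ the number of edges of $\sigma_i$. $\mathcal B_{\mathcal C}(\sigma)$ is the set of $2^{|\sigma|}$ vectors $b\in\{-1,1\}^d$ obtained by choosing independently one of the two cyclic orientations of each $\sigma_i$ and setting $b_{(x,C)}=1$ if edge $(x,C)$ is oriented from $x$ to $C$, $-1$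 otherwise. $p_0$ is uniform on the $d$ pairs; $q_{b,\epsilon}((x,C))=\frac1d+\frac{\epsilon b_{(x,C)}}d$; $\mu^N$ denotes the law of $N$ i.i.d. samples; $\chi^2(P,Q)=\mathbb E_Q[(dP/dQ)^2]-1$. *)

From HB Require Import structures.
From mathcomp Require Import all_boot all_order all_algebra.
From mathcomp Require Import reals sequences exp.
Set Implicit Arguments. Unset Strict Implicit. Unset Printing Implicit Defensive.
Import Order.TTheory GRing.Theory Num.Theory.
Local Open Scope ring_scope.

Section Defs.
Variable X : finType.
Variable CC : {set {set X}}.

Definition is_node (v : X + {set X}) : bool :=
  match v with inl _ => true | inr A => A \in CC end.

Definition gadj (u v : X + {set X}) : bool :=
  match u, v with
  | inl x, inr A => (A \in CC) && (x \in A)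
  | inr A, inl x => (A \in CC) && (x \in A)
  | _, _ => false
  end.

Definition G_connected : Prop :=
  forall u v, is_node u -> is_node v -> connect gadj u v.

(* coordinates: pairs (x, S) with x \in S \in CC, i.e. edges of G_C *)
Definition is_edge (p : X * {set X}) : bool := (p.2 \in CC) && (p.1 \in p.2).
Definition Edge := {p : X * {set X} | is_edge p}.

(* d = sum_{S in CC} |S| = number of edges *)
Definition dd : nat := \sum_(S in CC) #|S|.

(* A simple cycle of the bipartite graph G_C of length 2k (k >= 2) is
   x_0 - C_0 - x_1 - C_1 - ... - x_{k-1} - C_{k-1} - x_0, with distinct items
   x_i and distinct sets C_i; it is encoded by the sequence of pairs (x_i, C_i). *)
Definition cyc_items (c : seq (X * {set X})) : seq X := map fst c.
Definition cyc_sets (c : seq (X * {set X})) : seq {set X} := map snd c.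
(* pairs ((x_i, C_i), x_{i+1 mod k}) *)
Definition cyc_steps (c : seq (X * {set X})) := zip c (rot 1 (cyc_items c)).

Definition is_simple_cycle (c : seq (X * {set X})) : bool :=
  [&& (2 <= size c)%N, uniq (cyc_items c), uniq (cyc_sets c) &
      all (fun q : (X * {set X}) * X =>
             [&& q.1.2 \in CC, q.1.1 \in q.1.2 & q.2 \in q.1.2]) (cyc_steps c)].

(* edges (x_i, C_i): oriented x -> C when the cycle is traversed
   x_0 -> C_0 -> x_1 -> ... (the "reference" orientation) *)
Definition cyc_fwd_edges (c : seq (X * {set X})) : seq (X * {set X}) := c.
(* edges (x_{i+1}, C_i): oriented C -> x in the reference orientation *)
Definition cyc_bwd_edges (c : seq (X * {set X})) : seq (X * {set X}) :=
  [seq (q.2, q.1.2) | q <- cyc_steps c].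
Definition cyc_edges (c : seq (X * {set X})) : seq (X * {set X}) :=
  cyc_fwd_edges c ++ cyc_bwd_edges c.
Definition cyc_len (c : seq (X * {set X})) : nat := size (cyc_edges c).

Definition is_cycle_decomposition (sigma : seq (seq (X * {set X}))) : Prop :=
  all is_simple_cycle sigma /\
  (forall p : X * {set X}, count (fun c => p \in cyc_edges c) sigma = (is_edge p : nat)).

Variable R : realType.

Definition alpha (sigma : seq (seq (X * {set X}))) : R :=
  (dd%:R)^-1 * \sum_(c <- sigma) ((cyc_len c)%:R ^+ 2).

(* a vector b in {-1,1}^d is encoded as b : {ffun Edge -> bool},
   true <-> +1 (edge oriented from x to C), false <-> -1 *)
Definition sgn (b : bool) : R := if b then 1 else -1.

(* orientation choice s_i = true: reference orientation of sigma_i;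
   s_i = false: the reverse orientation *)
Definition b_of (sigma : seq (seq (X * {set X})))
    (s : (size sigma).-tuple bool) : {ffun Edge -> bool} :=
  [ffun e : Edge =>
     let i := find (fun c => val e \in cyc_edges c) sigma in
     (val e \in cyc_fwd_edges (nth [::] sigma i)) == nth true s i].

Definition Bset (sigma : seq (seq (X * {set X}))) : {set {ffun Edge -> bool}} :=
  [set b_of s | s in {: (size sigma).-tuple bool}].

Definition p0 (e : Edge) : R := (dd%:R)^-1.
Definition q_b (b : {ffun Edge -> bool}) (eps : R) (e : Edge) : R :=
  (dd%:R)^-1 + eps * sgn (b e) / dd%:R.

Definition iid (N : nat) (p : Edge -> R) (w : {ffun 'I_N -> Edge}) : R :=
  \prod_(j < N) p (w j).

Definition PP0 (N : nat) (w : {ffun 'I_N -> Edge}) : R := iid p0 w.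

Definition PP1 (sigma : seq (seq (X * {set X}))) (eps : R) (N : nat)
    (w : {ffun 'I_N -> Edge}) : R :=
  ((2 ^ size sigma)%:R)^-1 * \sum_(b in Bset sigma) iid (q_b b eps) w.

End Defs.

Definition chi2 (R : realType) (T : finType) (P Q : T -> R) : R :=
  \sum_(w : T) Q w * (P w / Q w) ^+ 2 - 1.

From HB Require Import structures.
From mathcomp Require Import all_boot all_order all_algebra.
From mathcomp Require Import reals sequences exp.
From mathcomp Require Import zify ring lra.
From mathcomp Require Import boolp topology normedtype.
Import Order.TTheory GRing.Theory Num.Theory.
Import numFieldNormedType.Exports.
Local Open Scope ring_scope.
Set Implicit Arguments. Unset Strict Implicit. Unset Printing Implicit Defensive.

(* For an orientation s of the cycles let b_s be its sign vector and q_s = q_{b_s,eps}.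
   Each cycle has as many forward as backward edges, so sum_e b_s(e) = 0 and
     d^N * sum_w P1(w)^2 <= 4^-|sigma| * sum_(s,t) (1 + eps^2/d * <b_s, b_t>)^N,
   while <b_s, b_t> = sum_i s_i t_i |sigma_i|.  Bounding (1 + x)^N <= exp(N x) makes the
   double sum factor over the cycles into prod_i cosh(lam |sigma_i|) with lam = N eps^2 / d,
   and cosh y <= exp(y^2 / 2) (compare the Taylor coefficients 1/(2m)! <= 1/(2^m m!))
   gives exp(lam^2/2 * sum_i |sigma_i|^2) = exp(N^2 eps^4 / (2 d) * alpha). *)

Lemma leq_expn2_fact_double m : (2 ^ m * m`! <= (m.*2)`!)%N.
Proof.
elim: m => [//|m IH]; rewrite doubleS !factS expnS.
move: IH; set a := (2 ^ m * m`!)%N; set b := (m.*2)`!; rewrite -!mul2n; nia.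
Qed.

Section CoshBound.
Variable R : realType.
Implicit Types x : R.
Local Open Scope classical_set_scope.

Definition cosh_coeff x k := exp_coeff x k + exp_coeff (- x) k.

Lemma cosh_coeff_double x m : cosh_coeff x m.*2 = 2 * exp_coeff x m.*2.
Proof. by rewrite /cosh_coeff /exp_coeff /= -mul2n !exprM sqrrN mulr_natl mulr2n. Qed.

Lemma cosh_coeff_doubleS x m : cosh_coeff x (m.*2).+1 = 0.
Proof. by rewrite /cosh_coeff /exp_coeff /= -mul2n !exprS !exprM sqrrN !mulNr addrN. Qed.

Lemma exp_coeff_double_ge0 x m : 0 <= exp_coeff x m.*2.
Proof. by rewrite /exp_coeff /= -mul2n exprM divr_ge0 // exprn_ge0 // sqr_ge0. Qed.

Lemma cosh_coeff_ge0 x k : 0 <= cosh_coeff x k.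
Proof.
rewrite -[k]odd_double_half; case: (odd k).
  by rewrite add1n cosh_coeff_doubleS.
by rewrite add0n cosh_coeff_double mulr_ge0 ?exp_coeff_double_ge0.
Qed.

Lemma exp_coeff_double_le x m : exp_coeff x m.*2 <= exp_coeff (x ^+ 2 / 2) m.
Proof.
have x2m_ge0 : 0 <= x ^+ m.*2 by rewrite -mul2n exprM exprn_ge0 ?sqr_ge0.
rewrite /exp_coeff /= exprMn exprVn -exprM mul2n -mulrA ler_wpM2l //.
rewrite -invfM lef_pV2 ?posrE ?mulr_gt0 ?exprn_gt0 ?ltr0n ?fact_gt0 //.
by rewrite -natrX -natrM ler_nat leq_expn2_fact_double.
Qed.

Lemma series_cosh_coeff_double_le x m :
  series (cosh_coeff x) m.*2 <= 2 * series (exp_coeff (x ^+ 2 / 2)) m.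
Proof.
elim: m => [|m IH]; first by rewrite /series /= !big_geq // mulr0.
rewrite doubleS /series /= !big_nat_recr //= cosh_coeff_doubleS addr0 mulrDr.
by rewrite lerD // cosh_coeff_double ler_pM2l // exp_coeff_double_le.
Qed.

Lemma expr1Dx_le_expR x n : 0 <= 1 + x -> (1 + x) ^+ n <= expR (n%:R * x).
Proof.
move=> x_ge; rewrite expRM_natl lerXn2r ?nnegrE ?expR_ge0 //; exact: expR_ge1Dx.
Qed.

Lemma expR_add_expRN_le x : expR x + expR (- x) <= 2 * expR (x ^+ 2 / 2).
Proof.
have cvg_cosh : series (cosh_coeff x) @ \oo --> expR x + expR (- x).
  have -> : series (cosh_coeff x) = series (exp_coeff x) \+ series (exp_coeff (- x)).
    by apply/funext => m; rewrite /series /= -big_split.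
  exact: cvgD (is_cvg_series_exp_coeff _) (is_cvg_series_exp_coeff _).
have cosh_incr : nondecreasing_seq (series (cosh_coeff x)).
  by apply: nondecreasing_series => k _ _; exact: cosh_coeff_ge0.
have exp_incr : nondecreasing_seq (series (exp_coeff (x ^+ 2 / 2))).
  by apply: nondecreasing_series => k _ _; rewrite exp_coeff_ge0 // divr_ge0 ?sqr_ge0.
rewrite -(cvg_lim _ cvg_cosh) //; apply: limr_le; first exact: cvgP cvg_cosh.
apply: nearW => m; apply: le_trans (cosh_incr m m.*2 _) _; first by rewrite -addnn leq_addr.
apply: le_trans (series_cosh_coeff_double_le x m) _.
by rewrite ler_pM2l //; apply: nondecreasing_cvgn_le => //; exact: is_cvg_series_exp_coeff.
Qed.

Lemma sum_sgn_mul_expR_le x :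
  \sum_(a : bool) \sum_(b : bool) expR (sgn R a * sgn R b * x) <= 4 * expR (x ^+ 2 / 2).
Proof.
rewrite !big_bool /= /sgn !(mul1r, mulN1r, mulr1, mulrN1, opprK).
by have := expR_add_expRN_le x; lra.
Qed.

End CoshBound.

Lemma nth_rot1_neq (T : eqType) (x0 : T) s i :
  uniq s -> (1 < size s)%N -> (i < size s)%N -> nth x0 (rot 1 s) i != nth x0 s i.
Proof.
case: s => [//|x s] uxs; rewrite /= !ltnS => s_gt0 i_le; rewrite rot1_cons nth_rcons.
case: ltnP => [i_lt | i_ge].
  by rewrite -[nth x0 s i]/(nth x0 (x :: s) i.+1) nth_uniq //= ?ltnS ?ltnW // gtn_eqF.
have -> : i = size s by apply/eqP; rewrite eqn_leq i_le i_ge.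
rewrite eqxx -(prednK s_gt0) /=; have /andP[xNs _] := uxs.
by apply: contraNneq xNs => ->; rewrite mem_nth // prednK.
Qed.

Lemma find_count1 (T : Type) (x0 : T) (a : pred T) s i :
  count a s = 1%N -> (i < size s)%N -> (find a s == i) = a (nth x0 s i).
Proof.
move=> count_a i_lt; have has_a : has a s by rewrite has_count count_a.
apply/eqP/idP => [<- | a_i]; first exact: nth_find.
have find_le : (find a s <= i)%N.
  by rewrite leqNgt; apply: contraTN a_i => /(before_find x0) ->.
apply/eqP; rewrite eqn_leq find_le leqNgt; apply/negP => find_lt.
have : (0 < count a (take i s))%N by rewrite -has_count has_take.
rewrite -(cat_take_drop i s) count_cat (drop_nth x0 i_lt) /= a_i in count_a; lia.
Qed.

Lemma sum_tuple_prod (R : comPzSemiRingType) (T : finType) n (F : 'I_n -> T -> R) :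
  \sum_(s : n.-tuple T) \prod_(i < n) F i (tnth s i) = \prod_(i < n) \sum_(a : T) F i a.
Proof.
rewrite bigA_distr_bigA (reindex (fun f : {ffun 'I_n -> T} => [tuple f i | i < n])) /=.
  by apply: eq_bigr => f _; apply: eq_bigr => i _; rewrite tnth_mktuple.
exists (fun s => [ffun i => tnth s i]) => [f _ | s _].
  by apply/ffunP => i; rewrite ffunE tnth_mktuple.
by apply: eq_from_tnth => i; rewrite tnth_mktuple ffunE.
Qed.

Lemma ler_sum_imset (R : numDomainType) (I J : finType) (h : I -> J) (A : {pred I})
    (F : J -> R) : (forall j, 0 <= F j) ->
  \sum_(j in h @: A) F j <= \sum_(i in A) F (h i).
Proof.
move=> F_ge0; rewrite (partition_big_imset h) /=.
apply: ler_sum => j /imsetP [i iA ->].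
by rewrite (bigD1 i) /= ?iA ?eqxx // lerDl sumr_ge0.
Qed.

Section SimpleCycles.
Variables (X : finType) (CC : {set {set X}}).
Implicit Type c : seq (X * {set X}).

Lemma card_Edge : #|{: Edge CC}| = dd CC.
Proof.
rewrite card_sig /dd -sum1_card big_mkcond /=.
rewrite -(pair_bigA _ (fun (x : X) (S : {set X}) =>
  if (S \in CC) && (x \in S) then 1%N else 0%N)) /=.
rewrite exchange_big /= [RHS]big_mkcond /=; apply: eq_bigr => S _.
by case: (S \in CC) => /=; [rewrite -sum1_card [RHS]big_mkcond | rewrite big1].
Qed.

Lemma simple_cycle_fwd_bwd_disjoint c p :
  is_simple_cycle CC c -> p \in c -> p \notin cyc_bwd_edges c.
Proof.
case/and4P => c_ge2 u_items u_sets _ /(nthP p) [i i_lt <-].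
apply/mapP => -[q /(nthP (p, p.1))]; rewrite size_zip size_rot size_map minnn.
move=> [j j_lt <-]; rewrite nth_zip ?size_rot ?size_map //= => e.
move: (congr1 fst e) (congr1 snd e) => {e} /= e_item e_set.
have eij : i = j.
  by apply/eqP; rewrite -(nth_uniq p.2 _ _ u_sets) ?size_map // !(nth_map p) // e_set.
have := @nth_rot1_neq _ p.1 _ j u_items; rewrite size_map => /(_ c_ge2 j_lt).
by rewrite (nth_map p) // -e_item eij eqxx.
Qed.

Lemma size_cyc_bwd_edges c : size (cyc_bwd_edges c) = size c.
Proof. by rewrite size_map size_zip size_rot size_map minnn. Qed.

Lemma cyc_lenE c : cyc_len c = (size c).*2.
Proof. by rewrite /cyc_len size_cat size_cyc_bwd_edges addnn. Qed.

Lemma simple_cycle_uniq c : is_simple_cycle CC c -> uniq c.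
Proof. by case/and4P => _ u_items _ _; exact: map_uniq u_items. Qed.

Lemma simple_cycle_uniq_bwd c : is_simple_cycle CC c -> uniq (cyc_bwd_edges c).
Proof.
case/and4P => _ _ u_sets _; apply: (map_uniq (f := snd)).
rewrite -map_comp (eq_map (g := snd \o fst)) // map_comp.
by rewrite -/(unzip1 _) unzip1_zip // size_rot size_map.
Qed.

Lemma simple_cycle_edges c : is_simple_cycle CC c -> all (is_edge CC) (cyc_edges c).
Proof.
case/and4P => _ _ _ steps; rewrite all_cat; apply/andP; split.
  rewrite /cyc_fwd_edges -[c](@unzip1_zip _ _ c (rot 1 (cyc_items c))) ?size_rot ?size_map //.
  by rewrite all_map; apply: sub_all steps => -[[x S] y] /and3P[S_CC x_S _]; apply/andP.
by rewrite all_map; apply: sub_all steps => -[[x S] y] /and3P[S_CC _ y_S]; apply/andP.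
Qed.

Lemma card_Edge_mem (l : seq (X * {set X})) : uniq l -> all (is_edge CC) l ->
  #|[pred e : Edge CC | val e \in l]| = size l.
Proof.
move=> ul l_edges; rewrite -(card_uniqP ul) -(card_image val_inj).
apply: eq_card => p; apply/fintype.imageP/idP => [[e e_l ->] // | p_l].
by exists (exist _ p (allP l_edges p p_l)).
Qed.

(* [val e \in c] says that [e] is a forward edge of [c]. *)
Lemma sum_simple_cycle_edges (V : nmodType) c (f : bool -> V) : is_simple_cycle CC c ->
  \sum_(e : Edge CC | val e \in cyc_edges c) f (val e \in c) = (f true + f false) *+ size c.
Proof.
move=> c_simple; have := simple_cycle_edges c_simple.
rewrite all_cat => /andP[fwd_edges bwd_edges].
rewrite (bigID (fun e : Edge CC => val e \in c)) mulrnDl; congr (_ + _).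
  rewrite -(card_Edge_mem (simple_cycle_uniq c_simple) fwd_edges) -sumr_const.
  apply: eq_big => [e | e /andP[_ ->] //].
  by rewrite !inE mem_cat andb_idl // => ->.
rewrite -size_cyc_bwd_edges -(card_Edge_mem (simple_cycle_uniq_bwd c_simple) bwd_edges).
rewrite -sumr_const; apply: eq_big => [e | e /andP[_ /negPf ->] //].
rewrite !inE mem_cat; case: (boolP (val e \in c)) => e_c; last by rewrite andbT.
by rewrite (negPf (simple_cycle_fwd_bwd_disjoint c_simple e_c)).
Qed.

End SimpleCycles.

Section CycleDecomposition.
Variables (X : finType) (CC : {set {set X}}) (sigma : seq (seq (X * {set X}))).
Hypothesis sigma_dec : is_cycle_decomposition CC sigma.
Implicit Types s t : (size sigma).-tuple bool.

Definition cycle_index (e : Edge CC) : nat := find (fun c => val e \in cyc_edges c) sigma.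

Lemma count_cycles_Edge (e : Edge CC) : count (fun c => val e \in cyc_edges c) sigma = 1%N.
Proof. by rewrite sigma_dec.2 (valP e). Qed.

Lemma cycle_index_lt e : (cycle_index e < size sigma)%N.
Proof. by rewrite -has_find has_count count_cycles_Edge. Qed.

Lemma cycle_indexE e i : (i < size sigma)%N ->
  (cycle_index e == i) = (val e \in cyc_edges (nth [::] sigma i)).
Proof. exact/find_count1/count_cycles_Edge. Qed.

Lemma sum_Edge_by_cycle (V : nmodType) (F : Edge CC -> V) :
  \sum_e F e = \sum_(i < size sigma) \sum_(e | val e \in cyc_edges (nth [::] sigma i)) F e.
Proof.
rewrite (partition_big (fun e => Ordinal (cycle_index_lt e)) predT) //=.
by apply: eq_bigr => i _; apply: eq_bigl => e; rewrite -val_eqE /= cycle_indexE.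
Qed.

Lemma simple_cycle_nth i : (i < size sigma)%N -> is_simple_cycle CC (nth [::] sigma i).
Proof. by move=> i_lt; apply: (allP sigma_dec.1); rewrite mem_nth. Qed.

Lemma b_of_cycle s (i : 'I_(size sigma)) e :
  val e \in cyc_edges (nth [::] sigma i) ->
  b_of CC s e = ((val e \in nth [::] sigma i) == tnth s i).
Proof.
rewrite /b_of ffunE /= -/(cycle_index e) (tnth_nth true) -cycle_indexE //.
by move=> /eqP ->.
Qed.

Variable R : realType.

Lemma sum_sgn_b_of s : \sum_e sgn R (b_of CC s e) = 0.
Proof.
rewrite sum_Edge_by_cycle big1 // => i _.
rewrite (eq_bigr (fun e => sgn R ((val e \in nth [::] sigma i) == tnth s i))); last first.
  by move=> e e_i; rewrite (b_of_cycle s e_i).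
rewrite (sum_simple_cycle_edges (fun a => sgn R (a == tnth s i))) ?simple_cycle_nth //.
by case: (tnth s i); rewrite /sgn /= ?addrN ?addNr mul0rn.
Qed.

Lemma sum_sgn_b_of_mul s t :
  \sum_e sgn R (b_of CC s e) * sgn R (b_of CC t e) =
  \sum_(i < size sigma) sgn R (tnth s i) * sgn R (tnth t i) * (cyc_len (nth [::] sigma i))%:R.
Proof.
rewrite sum_Edge_by_cycle; apply: eq_bigr => i _.
rewrite (eq_bigr (fun e => sgn R ((val e \in nth [::] sigma i) == tnth s i) *
                           sgn R ((val e \in nth [::] sigma i) == tnth t i))); last first.
  by move=> e e_i; rewrite (b_of_cycle s e_i) (b_of_cycle t e_i).
rewrite (sum_simple_cycle_edges (fun a => sgn R (a == tnth s i) * sgn R (a == tnth t i))).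
  rewrite cyc_lenE -mul2n natrM mulr_natr -mulr_natl.
  by case: (tnth s i); case: (tnth t i); rewrite /sgn /=; ring.
exact: simple_cycle_nth.
Qed.

End CycleDecomposition.

Section IidSamples.
Variables (X : finType) (CC : {set {set X}}) (R : realType) (N : nat).
Implicit Types (p q : Edge CC -> R) (w : {ffun 'I_N -> Edge CC}).

Lemma iidM p q w : iid p w * iid q w = iid (fun e => p e * q e) w.
Proof. by rewrite -big_split. Qed.

Lemma sum_iid p : \sum_(w : {ffun 'I_N -> Edge CC}) iid p w = (\sum_e p e) ^+ N.
Proof. by rewrite -[in RHS](card_ord N) -prodr_const bigA_distr_bigA. Qed.

Lemma chi2_PP0 (P : {ffun 'I_N -> Edge CC} -> R) : (0 < dd CC)%N ->
  chi2 P (@PP0 X CC R N) + 1 = (dd CC)%:R ^+ N * \sum_(w : {ffun 'I_N -> Edge CC}) P w ^+ 2.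
Proof.
move=> d_gt0; rewrite /chi2 subrK mulr_sumr; apply: eq_bigr => w _.
rewrite /PP0 /iid /p0 prodr_const card_ord exprVn.
by field; rewrite expf_neq0 // pnatr_eq0 -lt0n.
Qed.

End IidSamples.

Section Perturbation.
Variables (X : finType) (CC : {set {set X}}) (R : realType) (eps : R).
Implicit Types b : {ffun Edge CC -> bool}.
Local Notation d := ((dd CC)%:R : R).

Lemma q_bE b e : q_b b eps e = (1 + eps * sgn R (b e)) / d.
Proof. by rewrite /q_b mulrDl mul1r. Qed.

Lemma q_b_ge0 b e : `|eps| <= 1 -> 0 <= q_b b eps e.
Proof.
rewrite ler_norml q_bE => /andP[eps_ge eps_le].
by apply: divr_ge0 => //; case: (b e); rewrite /sgn; lra.
Qed.

Lemma sum_q_b_mul b b' : (0 < dd CC)%N ->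
  \sum_e sgn R (b e) = 0 -> \sum_e sgn R (b' e) = 0 ->
  d * \sum_e q_b b eps e * q_b b' eps e = 1 + eps ^+ 2 / d * \sum_e sgn R (b e) * sgn R (b' e).
Proof.
move=> d_gt0 sum_b sum_b'; have d_neq0 : d != 0 by rewrite pnatr_eq0 -lt0n.
have q_b_mulE e : q_b b eps e * q_b b' eps e = (1 + eps * sgn R (b e) + eps * sgn R (b' e)
    + eps ^+ 2 * (sgn R (b e) * sgn R (b' e))) / d ^+ 2.
  by rewrite !q_bE; field.
under eq_bigr => e _ do rewrite q_b_mulE.
rewrite -mulr_suml !big_split /= -!mulr_sumr sum_b sum_b' sumr_const card_Edge.
by field.
Qed.

End Perturbation.

Section ChiSquareBound.
Variables (X : finType) (CC : {set {set X}}) (R : realType).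
Variables (sigma : seq (seq (X * {set X}))) (eps : R) (N : nat).
Hypothesis sigma_dec : is_cycle_decomposition CC sigma.
Hypothesis eps_le1 : `|eps| <= 1.
Hypothesis d_gt0 : (0 < dd CC)%N.

Local Notation orientation := ((size sigma).-tuple bool).
Local Notation sample := {ffun 'I_N -> Edge CC}.

Local Notation d := ((dd CC)%:R : R).
Let M : R := (2 ^ size sigma)%:R.
Let lam : R := N%:R * (eps ^+ 2 / d).
Let L (i : 'I_(size sigma)) : R := (cyc_len (nth [::] sigma i))%:R.
Let q (s : orientation) := q_b (b_of CC s) eps.

Lemma PP1_ge0 (w : sample) : 0 <= PP1 sigma eps w.
Proof.
rewrite mulr_ge0 ?invr_ge0 // sumr_ge0 // => b _.
by rewrite prodr_ge0 // => j _; exact: q_b_ge0.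
Qed.

(* [Bset sigma] is the image of [b_of]; summing over all orientations instead
   avoids proving that [b_of] is injective. *)
Lemma PP1_le (w : sample) :
  PP1 sigma eps w <= M^-1 * \sum_(s : orientation) iid (q s) w.
Proof.
rewrite ler_wpM2l ?invr_ge0 // ler_sum_imset // => b.
by rewrite prodr_ge0 // => j _; exact: q_b_ge0.
Qed.

Lemma sum_iid_pair_le (s t : orientation) :
  d ^+ N * \sum_(w : sample) iid (q s) w * iid (q t) w <=
  \prod_(i < size sigma) expR (sgn R (tnth s i) * sgn R (tnth t i) * (lam * L i)).
Proof.
have pair_ge0 : 0 <= d * \sum_e q s e * q t e.
  by rewrite mulr_ge0 // sumr_ge0 // => e _; rewrite mulr_ge0 ?q_b_ge0.
under eq_bigr => w _ do rewrite iidM.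
rewrite sum_iid -exprMn.
rewrite sum_q_b_mul ?sum_sgn_b_of // sum_sgn_b_of_mul // in pair_ge0 *.
apply: le_trans (expr1Dx_le_expR N pair_ge0) _.
rewrite -expR_sum ler_expR !mulr_sumr le_eqVlt; apply/predU1l.
by apply: eq_bigr => i _; rewrite /lam /L; ring.
Qed.

Lemma sum_sqr_PP1_le :
  d ^+ N * \sum_(w : sample) PP1 sigma eps w ^+ 2 <=
  M^-1 ^+ 2 * \sum_(s : orientation) \sum_(t : orientation)
    \prod_(i < size sigma) expR (sgn R (tnth s i) * sgn R (tnth t i) * (lam * L i)).
Proof.
apply: le_trans
  (_ : d ^+ N * \sum_(w : sample) (M^-1 * \sum_(s : orientation) iid (q s) w) ^+ 2 <= _).
  rewrite ler_wpM2l ?exprn_ge0 //; apply: ler_sum => w _.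
  by apply: lerXn2r; rewrite ?nnegrE ?PP1_ge0 ?PP1_le // (le_trans (PP1_ge0 w) (PP1_le w)).
have -> : \sum_(w : sample) (M^-1 * \sum_(s : orientation) iid (q s) w) ^+ 2 =
    M^-1 ^+ 2 * \sum_(s : orientation) \sum_(t : orientation)
      \sum_(w : sample) iid (q s) w * iid (q t) w.
  under eq_bigr => w _ do rewrite exprMn [X in _ * X]expr2 big_distrlr /=.
  rewrite -mulr_sumr exchange_big /=; congr (_ * _).
  by apply: eq_bigr => s _; exact: exchange_big.
rewrite mulrCA ler_wpM2l ?exprn_ge0 ?invr_ge0 // mulr_sumr; apply: ler_sum => s _.
by rewrite mulr_sumr; apply: ler_sum => t _; exact: sum_iid_pair_le.
Qed.

Lemma sum_sqr_PP1_le_expR :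
  d ^+ N * \sum_(w : sample) PP1 sigma eps w ^+ 2 <=
  expR (N%:R ^+ 2 * eps ^+ 4 / (2 * d) * alpha CC R sigma).
Proof.
apply: le_trans sum_sqr_PP1_le _.
under eq_bigr => s _ do
  rewrite (sum_tuple_prod (fun i b => expR (sgn R (tnth s i) * sgn R b * (lam * L i)))).
rewrite (sum_tuple_prod (fun i a => \sum_b expR (sgn R a * sgn R b * (lam * L i)))).
apply: le_trans (_ : M^-1 ^+ 2 * \prod_i (4 * expR ((lam * L i) ^+ 2 / 2)) <= _).
  rewrite ler_wpM2l ?exprn_ge0 ?invr_ge0 //; apply: ler_prod => i _.
  rewrite sum_sgn_mul_expR_le andbT sumr_ge0 // => a _.
  by rewrite sumr_ge0 // => b _; rewrite expR_ge0.
have M4 : M^-1 ^+ 2 * 4 ^+ size sigma = 1.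
  rewrite /M natrX exprVn -exprM mulnC exprM (_ : 2 ^+ 2 = 4) ?mulVf ?expf_neq0 ?pnatr_eq0 //.
  by rewrite expr2 -natrM.
rewrite big_split /= prodr_const card_ord -expR_sum mulrA M4 mul1r.
rewrite le_eqVlt; apply/predU1l; congr expR.
rewrite /alpha (big_nth [::]) big_mkord !mulr_sumr; apply: eq_bigr => i _.
by rewrite /lam /L; field; rewrite pnatr_eq0 -lt0n.
Qed.

End ChiSquareBound.

Theorem lemma5p2 (X : finType) (CC : {set {set X}}) (R : realType)
  (sigma : seq (seq (X * {set X}))) (eps : R) (N : nat) :
  (* standing assumptions on C *)
  (forall S, S \in CC -> 2 <= #|S|)%N ->
  (#|X| <= #|CC|)%N ->
  G_connected CC ->
  (forall S, S \in CC -> ~~ odd #|S|) ->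
  (forall x : X, ~~ odd #|[set S in CC | x \in S]|) ->
  (* sigma is a cycle decomposition of G_C *)
  is_cycle_decomposition CC sigma ->
  0 <= eps <= 1 ->
  (0 < N)%N ->
  chi2 (@PP1 X CC R sigma eps N) (@PP0 X CC R N) + 1
    <= expR ((N%:R) ^+ 2 * eps ^+ 4 / (2 * (dd CC)%:R) * alpha CC R sigma).
Proof.
move=> _ _ _ _ _ sigma_dec /andP[eps_ge0 eps_le1] N_gt0.
have eps_norm_le1 : `|eps| <= 1 by rewrite ger0_norm.
have [d_eq0 | d_gt0] := posnP (dd CC).
  rewrite /chi2 subrK big1 ?expR_ge0 // => w _.
  (* without edges there is no sample of positive length *)
  by have := card0_eq (etrans (card_Edge CC) d_eq0) (w (Ordinal N_gt0)); rewrite inE.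
by rewrite chi2_PP0 //; exact: sum_sqr_PP1_le_expR.
Qed.
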